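(* For all well-typed terms $\Gamma\vdash t:A$ and $\Gamma\vdash u:A$ of $\lambda^{S}$: $\Gamma\vdash t\equiv u:A$ holds in $\lambda^{S}$ if and only if $[\![t]\!]=[\![u]\!]:[\![\Gamma]\!]\to[\![A]\!]$ in every categorical model of $\lambda^{S}$ (i.e. every cartesian closed category equipped with a strong endofunctor, for every choice of interpretation of the base type).
   Context: Types: $A,B ::= \iota \mid 1 \mid A\times B \mid A\to B \mid \Diamond A$, where $\iota$ is a base type. A context $\Gamma$ is a list $x_1:A_1,\dots,x_n:A_n$ of distinct variables. Terms of the simply typed part: variables, $()$, $\langle t,u\rangle$, $\mathsf{fst}\,t$, $\mathsf{snd}\,t$, $\lambda x.t$, $t\,u$, with the standard typing rules. Modal term formers: (letmap) if $\Gamma\vdash t:\Diamond A$ and $\Gamma,x:A\vdash u:B$ then $\Gamma\vdash \mathsf{letmap}\ x=t\ \mathsf{in}\ u:\Diamond B$; (ret) if $\Gamma\vdash t:A$ then $\Gamma\vdash\mathsf{ret}\,t:\Diamond A$; (let) if $\Gamma\vdash t:\Diamond A$ and $\Gamma,x:A\vdash u:\Diamond B$ then $\Gamma\vdash\mathsf{let}\ x=t\ \mathsf{in}\ u:\Diamond B$. The calculus $\lambda^{S}$ has only letmap; $\lambda^{SR}$ has letmap and ret; $\lambda^{SJ}$ has letmap and let; $\lambda^{ML}$ (Moggi's monadic metalanguage) has ret and let. The equational theory $\Gamma\vdash t\equiv u:A$ of each calculus is the least congruence on well-typed terms (equivalence relation compatible with all term formers) containing the $\beta\eta$-laws of the simply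 typed lambda calculus ($t\equiv()$ for $t:1$; $t\equiv\langle\mathsf{fst}\,t,\mathsf{snd}\,t\rangle$; $\mathsf{fst}\langle t,u\rangle\equiv t$; $\mathsf{snd}\langle t,u\rangle\equiv u$; $t\equiv\lambda x.\,t\,x$ with $x$ fresh; $(\lambda x.t)\,u\equiv t[u/x]$) and the following modal laws, each included in the indicated calculi (terms are implicitly weakened into larger contexts where needed; $t[u/x]$ is capture-avoiding substitution): (letmap-$\eta$) $t\equiv\mathsf{letmap}\ x=t\ \mathsf{in}\ x$ [$\lambda^{S},\lambda^{SR},\lambda^{SJ}$]; (letmap-$\beta$) $\mathsf{letmap}\ y=(\mathsf{letmap}\ x=t\ \mathsf{in}\ u)\ \mathsf{in}\ u'\equiv\mathsf{letmap}\ x=t\ \mathsf{in}\ u'[u/y]$ [$\lambda^{S},\lambda^{SR},\lambda^{SJ}$]; (ret-letmap) $\mathsf{letmap}\ x=\mathsf{ret}\,t\ \mathsf{in}\ u\equiv\mathsf{ret}(u[t/x])$ [$\lambda^{SR}$]; (let-letmap) $\mathsf{let}\ y=(\mathsf{letmap}\ x=t\ \mathsf{in}\ u)\ \mathsf{in}\ u'\equiv\mathsf{let}\ x=t\ \mathsf{in}\ u'[u/y]$ [$\lambda^{SJ}$]; (com) $\mathsf{letmap}\ y=(\mathsf{let}\ x=t\ \mathsf{in}\ u)\ \mathsf{in}\ u'\equiv\mathsf{let}\ x=t\ \mathsf{in}\ (\mathsf{letmap}\ y=u\ \mathsf{in}\ u')$ [$\lambda^{SJ}$]; (ass) $\mathsf{let}\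 y=(\mathsf{let}\ x=t\ \mathsf{in}\ u)\ \mathsf{in}\ u'\equiv\mathsf{let}\ x=t\ \mathsf{in}\ (\mathsf{let}\ y=u\ \mathsf{in}\ u')$ [$\lambda^{SJ},\lambda^{ML}$]; (ML-$\beta$) $\mathsf{let}\ x=\mathsf{ret}\,t\ \mathsf{in}\ u\equiv u[t/x]$ [$\lambda^{ML}$]; (ML-$\eta$) $t\equiv\mathsf{let}\ x=t\ \mathsf{in}\ \mathsf{ret}\,x$ [$\lambda^{ML}$]. Categorical models: a categorical model of $\lambda^{S}$ is a cartesian closed category $\mathcal C$ with an endofunctor $D$ and a strength $\mathrm{st}_{X,Y}:X\times DY\to D(X\times Y)$ natural in $X,Y$ satisfying $D\pi_2\circ\mathrm{st}_{1,X}=\pi_2$ and $D\alpha\circ\mathrm{st}_{X\times Y,Z}=\mathrm{st}_{X,Y\times Z}\circ(\mathrm{id}\times\mathrm{st}_{Y,Z})\circ\alpha$ ($\alpha$ the associator). Given an object interpreting $\iota$, types are interpreted by $[\![1]\!]$ terminal, products, exponentials, $[\![\Diamond A]\!]=D[\![A]\!]$; contexts by iterated products starting from the terminal object; simply typed terms in the standard cartesian closed way, and $[\![\mathsf{letmap}\ x=t\ \mathsf{in}\ u]\!]=D[\![u]\!]\circ\mathrm{st}\circ\langle\mathrm{id},[\![t]\!]\rangle$. *)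

From Stdlib Require Import List.
Import ListNotations.


Inductive ty : Type :=
| Base : ty
| Unit : ty
| Prod : ty -> ty -> ty
| Arr  : ty -> ty -> ty
| Dia  : ty -> ty.

(* A context x1:A1,...,xn:An is the list [An; ...; A1] (head = last var). *)
Definition ctx := list ty.

Inductive var : ctx -> ty -> Type :=
| Vz : forall G A, var (A :: G) A
| Vs : forall G A B, var G A -> var (B :: G) A.
Arguments Vz {G A}.
Arguments Vs {G A B} v.

Inductive tm : ctx -> ty -> Type :=
| tvar : forall G A, var G A -> tm G A
| tunit : forall G, tm G Unit
| tpair : forall G A B, tm G A -> tm G B -> tm G (Prod A B)
| tfst : forall G A B, tm G (Prod A B) -> tm G A
| tsnd : forall G A B, tm G (Prod A B) -> tm G B
| tlam : forall G A B, tm (A :: G) B -> tm G (Arr A B)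
| tapp : forall G A B, tm G (Arr A B) -> tm G A -> tm G B
| tletmap : forall G A B, tm G (Dia A) -> tm (A :: G) B -> tm G (Dia B).
Arguments tvar {G A} v.
Arguments tunit {G}.
Arguments tpair {G A B} t u.
Arguments tfst {G A B} t.
Arguments tsnd {G A B} t.
Arguments tlam {G A B} t.
Arguments tapp {G A B} t u.
Arguments tletmap {G A B} t u.

Definition ren (G D : ctx) := forall A, var G A -> var D A.
Definition sub (G D : ctx) := forall A, var G A -> tm D A.

Definition lift_ren {G D B} (r : ren G D) : ren (B :: G) (B :: D) :=
  fun A v =>
    match v in var L A0 return
      (match L with nil => unit | B0 :: G0 => ren G0 D -> var (B0 :: D) A0 end) with
    | Vz => fun _ => Vz
    | Vs v' => fun r => Vs (r _ v')
    end r.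

Fixpoint rename {G D A} (r : ren G D) (t : tm G A) {struct t} : tm D A :=
  match t in tm G0 A0 return ren G0 D -> tm D A0 with
  | tvar v => fun r => tvar (r _ v)
  | tunit => fun _ => tunit
  | tpair t u => fun r => tpair (rename r t) (rename r u)
  | tfst t => fun r => tfst (rename r t)
  | tsnd t => fun r => tsnd (rename r t)
  | tlam t => fun r => tlam (rename (lift_ren r) t)
  | tapp t u => fun r => tapp (rename r t) (rename r u)
  | tletmap t u => fun r => tletmap (rename r t) (rename (lift_ren r) u)
  end r.

Definition wk {G A B} (t : tm G A) : tm (B :: G) A :=
  rename (fun _ v => Vs v) t.

Definition scons {G D B} (u : tm D B) (s : sub G D) : sub (B :: G) D :=
  fun A v =>
    match v in var L A0 return
      (match L with nil => unit | B0 :: G0 => tm D B0 -> sub G0 D -> tm D A0 end) with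
    | Vz => fun u _ => u
    | Vs v' => fun _ s => s _ v'
    end u s.

Definition ids {G} : sub G G := fun _ v => tvar v.

Definition lift_sub {G D B} (s : sub G D) : sub (B :: G) (B :: D) :=
  scons (tvar Vz) (fun _ v => wk (s _ v)).

Fixpoint subst {G D A} (s : sub G D) (t : tm G A) {struct t} : tm D A :=
  match t in tm G0 A0 return sub G0 D -> tm D A0 with
  | tvar v => fun s => s _ v
  | tunit => fun _ => tunit
  | tpair t u => fun s => tpair (subst s t) (subst s u)
  | tfst t => fun s => tfst (subst s t)
  | tsnd t => fun s => tsnd (subst s t)
  | tlam t => fun s => tlam (subst (lift_sub s) t)
  | tapp t u => fun s => tapp (subst s t) (subst s u)
  | tletmap t u => fun s => tletmap (subst s t) (subst (lift_sub s) u)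
  end s.

Definition subst1 {G A B} (t : tm (A :: G) B) (u : tm G A) : tm G B :=
  subst (scons u ids) t.

Inductive eqtm : forall {G : ctx} {A : ty}, tm G A -> tm G A -> Prop :=
| eq_rfl : forall G A (t : tm G A), eqtm t t
| eq_sym : forall G A (t u : tm G A), eqtm t u -> eqtm u t
| eq_trn : forall G A (t u v : tm G A), eqtm t u -> eqtm u v -> eqtm t v
| cg_pair : forall G A B (t t' : tm G A) (u u' : tm G B),
    eqtm t t' -> eqtm u u' -> eqtm (tpair t u) (tpair t' u')
| cg_fst : forall G A B (t t' : tm G (Prod A B)), eqtm t t' -> eqtm (tfst t) (tfst t')
| cg_snd : forall G A B (t t' : tm G (Prod A B)), eqtm t t' -> eqtm (tsnd t) (tsnd t')
| cg_lam : forall G A B (t t' : tm (A :: G) B), eqtm t t' -> eqtm (tlam t) (tlam t')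
| cg_app : forall G A B (t t' : tm G (Arr A B)) (u u' : tm G A),
    eqtm t t' -> eqtm u u' -> eqtm (tapp t u) (tapp t' u')
| cg_letmap : forall G A B (t t' : tm G (Dia A)) (u u' : tm (A :: G) B),
    eqtm t t' -> eqtm u u' -> eqtm (tletmap t u) (tletmap t' u')
| ax_unit_eta : forall G (t : tm G Unit), eqtm t tunit
| ax_prod_eta : forall G A B (t : tm G (Prod A B)), eqtm t (tpair (tfst t) (tsnd t))
| ax_fst_beta : forall G A B (t : tm G A) (u : tm G B), eqtm (tfst (tpair t u)) t
| ax_snd_beta : forall G A B (t : tm G A) (u : tm G B), eqtm (tsnd (tpair t u)) u
| ax_fun_eta : forall G A B (t : tm G (Arr A B)), eqtm t (tlam (tapp (wk t) (tvar Vz)))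
| ax_fun_beta : forall G A B (t : tm (A :: G) B) (u : tm G A),
    eqtm (tapp (tlam t) u) (subst1 t u)
| ax_letmap_eta : forall G A (t : tm G (Dia A)), eqtm t (tletmap t (tvar Vz))
| ax_letmap_beta : forall G A B C (t : tm G (Dia A)) (u : tm (A :: G) B) (u' : tm (B :: G) C),
    eqtm (tletmap (tletmap t u) u')
         (tletmap t (subst (scons u (fun _ v => tvar (Vs v))) u')).


Record CCC : Type := {
  obj : Type;
  hom : obj -> obj -> Type;
  cid : forall X, hom X X;
  comp : forall X Y Z, hom Y Z -> hom X Y -> hom X Z;
  comp_assoc : forall X Y Z W (f : hom X Y) (g : hom Y Z) (h : hom Z W),
      comp X Z W h (comp X Y Z g f) = comp X Y W (comp Y Z W h g) f;
  comp_id_l : forall X Y (f : hom X Y), comp X Y Y (cid Y) f = f;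
  comp_id_r : forall X Y (f : hom X Y), comp X X Y f (cid X) = f;
  one : obj;
  bang : forall X, hom X one;
  bang_uniq : forall X (f : hom X one), f = bang X;
  prod : obj -> obj -> obj;
  pr1 : forall X Y, hom (prod X Y) X;
  pr2 : forall X Y, hom (prod X Y) Y;
  pairing : forall Z X Y, hom Z X -> hom Z Y -> hom Z (prod X Y);
  pr1_pairing : forall Z X Y (f : hom Z X) (g : hom Z Y),
      comp Z (prod X Y) X (pr1 X Y) (pairing Z X Y f g) = f;
  pr2_pairing : forall Z X Y (f : hom Z X) (g : hom Z Y),
      comp Z (prod X Y) Y (pr2 X Y) (pairing Z X Y f g) = g;
  pairing_uniq : forall Z X Y (h : hom Z (prod X Y)),
      pairing Z X Y (comp Z (prod X Y) X (pr1 X Y) h) (comp Z (prod X Y) Y (pr2 X Y) h) = h;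
  exp : obj -> obj -> obj;
  ev : forall X Y, hom (prod (exp X Y) X) Y;
  curry : forall Z X Y, hom (prod Z X) Y -> hom Z (exp X Y);
  ev_curry : forall Z X Y (f : hom (prod Z X) Y),
      comp (prod Z X) (prod (exp X Y) X) Y (ev X Y)
        (pairing (prod Z X) (exp X Y) X
           (comp (prod Z X) Z (exp X Y) (curry Z X Y f) (pr1 Z X)) (pr2 Z X)) = f;
  curry_uniq : forall Z X Y (h : hom Z (exp X Y)),
      curry Z X Y (comp (prod Z X) (prod (exp X Y) X) Y (ev X Y)
        (pairing (prod Z X) (exp X Y) X
           (comp (prod Z X) Z (exp X Y) h (pr1 Z X)) (pr2 Z X))) = h
}.
Arguments cid {c} X.
Arguments comp {c X Y Z} g f.
Arguments one {c}.
Arguments bang {c} X.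
Arguments prod {c} X Y.
Arguments pr1 {c X Y}.
Arguments pr2 {c X Y}.
Arguments pairing {c Z X Y} f g.
Arguments exp {c} X Y.
Arguments ev {c X Y}.
Arguments curry {c Z X Y} f.

Definition pmap {C : CCC} {X X' Y Y' : obj C} (f : hom C X X') (g : hom C Y Y')
  : hom C (prod X Y) (prod X' Y') :=
  pairing (comp f pr1) (comp g pr2).

Definition assoc {C : CCC} (X Y Z : obj C)
  : hom C (prod (prod X Y) Z) (prod X (prod Y Z)) :=
  pairing (comp pr1 pr1) (pairing (comp pr2 pr1) pr2).

Record SModel (C : CCC) : Type := {
  Dob : obj C -> obj C;
  Dmap : forall X Y, hom C X Y -> hom C (Dob X) (Dob Y);
  Dmap_id : forall X, Dmap X X (cid X) = cid (Dob X);
  Dmap_comp : forall X Y Z (f : hom C X Y) (g : hom C Y Z),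
      Dmap X Z (comp g f) = comp (Dmap Y Z g) (Dmap X Y f);
  st : forall X Y, hom C (prod X (Dob Y)) (Dob (prod X Y));
  st_nat : forall X X' Y Y' (f : hom C X X') (g : hom C Y Y'),
      comp (st X' Y') (pmap f (Dmap Y Y' g)) = comp (Dmap _ _ (pmap f g)) (st X Y);
  st_unit : forall X, comp (Dmap (prod one X) X pr2) (st one X) = pr2;
  st_assoc : forall X Y Z,
      comp (Dmap _ _ (assoc X Y Z)) (st (prod X Y) Z)
      = comp (st X (prod Y Z)) (comp (pmap (cid X) (st Y Z)) (assoc X Y (Dob Z)))
}.
Arguments Dob {C} s X.
Arguments Dmap {C} s {X Y} _.
Arguments st {C} s X Y.

Fixpoint sem_ty {C : CCC} (M : SModel C) (b : obj C) (A : ty) : obj C :=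
  match A with
  | Base => b
  | Unit => one
  | Prod A B => prod (sem_ty M b A) (sem_ty M b B)
  | Arr A B => exp (sem_ty M b A) (sem_ty M b B)
  | Dia A => Dob M (sem_ty M b A)
  end.

Fixpoint sem_ctx {C : CCC} (M : SModel C) (b : obj C) (G : ctx) : obj C :=
  match G with
  | nil => one
  | A :: G => prod (sem_ctx M b G) (sem_ty M b A)
  end.

Fixpoint sem_var {C : CCC} (M : SModel C) (b : obj C) {G A} (v : var G A)
  : hom C (sem_ctx M b G) (sem_ty M b A) :=
  match v in var G0 A0 return hom C (sem_ctx M b G0) (sem_ty M b A0) with
  | Vz => pr2
  | Vs v' => comp (sem_var M b v') pr1
  end.

Fixpoint sem {C : CCC} (M : SModel C) (b : obj C) {G A} (t : tm G A)
  : hom C (sem_ctx M b G) (sem_ty M b A) :=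
  match t in tm G0 A0 return hom C (sem_ctx M b G0) (sem_ty M b A0) with
  | tvar v => sem_var M b v
  | tunit => bang _
  | tpair t u => pairing (sem M b t) (sem M b u)
  | tfst t => comp pr1 (sem M b t)
  | tsnd t => comp pr2 (sem M b t)
  | tlam t => curry (sem M b t)
  | tapp t u => comp ev (pairing (sem M b t) (sem M b u))
  | tletmap t u =>
      comp (Dmap M (sem M b u)) (comp (st M _ _) (pairing (cid _) (sem M b t)))
  end.

(** Soundness: every axiom of the theory is validated by every model, the only
    non-routine one being letmap-beta, which follows from naturality and the
    associativity law of the strength; substitution is interpreted by
    precomposition with the interpretation of the substitution.

    Completeness: the types and the terms [x : A |- t : B] modulo the theory form a
    cartesian closed category in which [letmap] induces a strong endofunctor
    [D f = letmap y = x in f[y/x]] with strength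
    [st = letmap y = snd x in <fst x, y>].  In this syntactic model the
    interpretation of a term [t] is the class of [t] precomposed with the
    projections out of the product of the context, so equal interpretations give
    provably equal terms. *)

From Stdlib Require Import List Setoid Morphisms FunctionalExtensionality
  ProofIrrelevance PropExtensionality IndefiniteDescription Eqdep_dec.
Import ListNotations.

Notation shift := (fun _ v => tvar (Vs v)).

(** * Renaming and substitution *)

Lemma var_cons_rect G B (P : forall A, var (B :: G) A -> Type) :
  P B Vz -> (forall A v, P A (Vs v)) -> forall A v, P A v.
Proof.
  intros Hz Hs A v.
  refine (match v in var L A0 return
            (match L return var L A0 -> Type with
             | nil => fun _ => unit
             | B' :: G' => fun v => forall P' : (forall A, var (B' :: G') A -> Type),
                  P' B' Vz -> (forall A v, P' A (Vs v)) -> P' A0 v end v) with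
          | Vz => _ | Vs v' => _ end P Hz Hs); simpl; auto.
Qed.

Lemma var_nil_empty A (v : var nil A) : False.
Proof.
  refine (match v in var L A0 return (match L with nil => False | _ => True end) with
          | Vz => I | Vs _ => I end).
Qed.

Lemma var_cons_ext G B (T : ty -> Type) (f g : forall A, var (B :: G) A -> T A) :
  f B Vz = g B Vz -> (forall A v, f A (Vs v) = g A (Vs v)) -> f = g.
Proof.
  intros Hz Hs. extensionality A; extensionality v. revert A v.
  apply var_cons_rect; auto.
Qed.

Lemma rename_rename G A (t : tm G A) : forall D E (r1 : ren G D) (r2 : ren D E),
  rename r2 (rename r1 t) = rename (fun A v => r2 A (r1 A v)) t.
Proof.
  induction t; intros; simpl; rewrite ?IHt, ?IHt1, ?IHt2; auto;
    do 2 f_equal; apply var_cons_ext; reflexivity.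
Qed.

Lemma rename_subst G A (t : tm G A) : forall D E (r : ren G D) (s : sub D E),
  subst s (rename r t) = subst (fun A v => s A (r A v)) t.
Proof.
  induction t; intros; simpl; rewrite ?IHt, ?IHt1, ?IHt2; auto;
    do 2 f_equal; apply var_cons_ext; reflexivity.
Qed.

Lemma subst_rename G A (t : tm G A) : forall D E (s : sub G D) (r : ren D E),
  rename r (subst s t) = subst (fun A v => rename r (s A v)) t.
Proof.
  induction t; intros; simpl; rewrite ?IHt, ?IHt1, ?IHt2; auto;
    do 2 f_equal; apply var_cons_ext; try reflexivity;
    intros; simpl; unfold wk; rewrite !rename_rename; reflexivity.
Qed.

Lemma subst_subst G A (t : tm G A) : forall D E (s1 : sub G D) (s2 : sub D E),
  subst s2 (subst s1 t) = subst (fun A v => subst s2 (s1 A v)) t.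
Proof.
  induction t; intros; simpl; rewrite ?IHt, ?IHt1, ?IHt2; auto;
    do 2 f_equal; apply var_cons_ext; try reflexivity;
    intros; simpl; unfold wk; rewrite rename_subst, subst_rename; reflexivity.
Qed.

Lemma subst_ids G A (t : tm G A) : subst ids t = t.
Proof.
  induction t; simpl; f_equal; auto;
    [rewrite <- IHt at 2 | rewrite <- IHt2 at 2]; f_equal; apply var_cons_ext; reflexivity.
Qed.

Lemma rename_as_subst G A (t : tm G A) : forall D (r : ren G D),
  rename r t = subst (fun A v => tvar (r A v)) t.
Proof.
  induction t; intros; simpl; rewrite ?IHt, ?IHt1, ?IHt2; auto;
    do 2 f_equal; apply var_cons_ext; reflexivity.
Qed.

Lemma subst_lift_wk G D A B (s : sub G D) (t : tm G A) :
  subst (lift_sub (B := B) s) (wk t) = wk (subst s t).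
Proof. unfold wk. rewrite rename_subst, subst_rename. reflexivity. Qed.

Lemma subst_scons_wk G D A B (t : tm G B) (u : tm D A) (s : sub G D) :
  subst (scons u s) (wk t) = subst s t.
Proof. unfold wk. rewrite rename_subst. reflexivity. Qed.

Lemma subst_subst1 G D A B (s : sub G D) (t : tm (A :: G) B) (u : tm G A) :
  subst s (subst1 t u) = subst1 (subst (lift_sub s) t) (subst s u).
Proof.
  unfold subst1. rewrite !subst_subst. f_equal. apply var_cons_ext; [reflexivity|].
  intros. simpl. rewrite subst_scons_wk, subst_ids. reflexivity.
Qed.

Lemma subst_lift_scons_shift G D A B C (s : sub G D) (u : tm (A :: G) B)
  (w : tm (B :: G) C) :
  subst (lift_sub s) (subst (scons u shift) w)
  = subst (scons (subst (lift_sub s) u) shift) (subst (lift_sub s) w).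
Proof.
  rewrite !subst_subst. f_equal. apply var_cons_ext; [reflexivity|].
  intros. simpl. unfold wk. rewrite rename_subst, rename_as_subst. reflexivity.
Qed.

#[export] Instance eqtm_Equivalence G A : Equivalence (@eqtm G A).
Proof. split; intro; intros; [apply eq_rfl | apply eq_sym; auto | eapply eq_trn; eauto]. Qed.

#[export] Instance tpair_Proper G A B : Proper (eqtm ==> eqtm ==> eqtm) (@tpair G A B).
Proof. repeat intro; apply cg_pair; auto. Qed.
#[export] Instance tfst_Proper G A B : Proper (eqtm ==> eqtm) (@tfst G A B).
Proof. repeat intro; apply cg_fst; auto. Qed.
#[export] Instance tsnd_Proper G A B : Proper (eqtm ==> eqtm) (@tsnd G A B).
Proof. repeat intro; apply cg_snd; auto. Qed.
#[export] Instance tlam_Proper G A B : Proper (eqtm ==> eqtm) (@tlam G A B).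
Proof. repeat intro; apply cg_lam; auto. Qed.
#[export] Instance tapp_Proper G A B : Proper (eqtm ==> eqtm ==> eqtm) (@tapp G A B).
Proof. repeat intro; apply cg_app; auto. Qed.
#[export] Instance tletmap_Proper G A B : Proper (eqtm ==> eqtm ==> eqtm) (@tletmap G A B).
Proof. repeat intro; apply cg_letmap; auto. Qed.

Lemma eqtm_subst G A (t u : tm G A) :
  eqtm t u -> forall D (s : sub G D), eqtm (subst s t) (subst s u).
Proof.
  induction 1; intros; simpl.
  all: try solve [constructor; auto | etransitivity; eauto | symmetry; auto].
  - rewrite subst_lift_wk. apply ax_fun_eta.
  - rewrite subst_subst1. apply ax_fun_beta.
  - rewrite subst_lift_scons_shift. apply ax_letmap_beta.
Qed.

#[export] Instance wk_Proper G A B : Proper (eqtm ==> eqtm) (@wk G A B).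
Proof. repeat intro. unfold wk. rewrite !rename_as_subst. apply eqtm_subst; auto. Qed.

Definition sub_eqtm {G D} (s1 s2 : sub G D) : Prop := forall A v, eqtm (s1 A v) (s2 A v).

#[export] Instance sub_eqtm_Equivalence G D : Equivalence (@sub_eqtm G D).
Proof.
  split; intro; intros; intros A v; [reflexivity | symmetry | etransitivity]; eauto.
Qed.

#[export] Instance scons_Proper G D B : Proper (eqtm ==> sub_eqtm ==> sub_eqtm) (@scons G D B).
Proof. intros u u' Hu s s' Hs. red. apply var_cons_rect; auto. Qed.

Lemma lift_sub_eqtm G D B (s s' : sub G D) :
  sub_eqtm s s' -> sub_eqtm (lift_sub (B := B) s) (lift_sub s').
Proof. intro Hs. apply scons_Proper; [reflexivity|]. intros A v. apply (wk_Proper _ _ B), Hs. Qed.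

Lemma subst_sub_eqtm G A (t : tm G A) : forall D (s s' : sub G D),
  sub_eqtm s s' -> eqtm (subst s t) (subst s' t).
Proof.
  induction t; intros D s s' Hs; simpl; try reflexivity; auto;
    [ apply cg_pair | apply cg_fst | apply cg_snd | apply cg_lam | apply cg_app
    | apply cg_letmap ]; auto using lift_sub_eqtm.
Qed.

#[export] Instance subst_Proper G D A :
  Proper (sub_eqtm ==> eqtm ==> eqtm) (@subst G D A).
Proof.
  intros s s' Hs t t' Ht. transitivity (subst s t').
  - apply eqtm_subst, Ht.
  - apply subst_sub_eqtm, Hs.
Qed.

(** * Cartesian closed categories with a strong endofunctor *)

Section CartesianClosed.
Variable C : CCC.

Lemma compA X Y Z W (f : hom C X Y) (g : hom C Y Z) (h : hom C Z W) :
  comp (comp h g) f = comp h (comp g f).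
Proof. symmetry; apply comp_assoc. Qed.

Lemma pr1_pairing_comp W Z X Y (f : hom C Z X) (g : hom C Z Y) (h : hom C W Z) :
  comp pr1 (comp (pairing f g) h) = comp f h.
Proof. rewrite <- compA, pr1_pairing. reflexivity. Qed.

Lemma pr2_pairing_comp W Z X Y (f : hom C Z X) (g : hom C Z Y) (h : hom C W Z) :
  comp pr2 (comp (pairing f g) h) = comp g h.
Proof. rewrite <- compA, pr2_pairing. reflexivity. Qed.

Lemma pairing_ext Z X Y (h : hom C Z (prod X Y)) f g :
  comp pr1 h = f -> comp pr2 h = g -> h = pairing f g.
Proof. intros <- <-. symmetry; apply pairing_uniq. Qed.

Lemma comp_pairing W Z X Y (f : hom C Z X) (g : hom C Z Y) (h : hom C W Z) :
  comp (pairing f g) h = pairing (comp f h) (comp g h).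
Proof. apply pairing_ext; [apply pr1_pairing_comp | apply pr2_pairing_comp]. Qed.

Lemma pairing_pr1_pr2 X Y : pairing (@pr1 C X Y) pr2 = cid _.
Proof. symmetry. apply pairing_ext; apply comp_id_r. Qed.

Lemma terminal_eq X (f g : hom C X one) : f = g.
Proof. rewrite (bang_uniq _ _ f), (bang_uniq _ _ g). reflexivity. Qed.

Lemma curry_comp W Z X Y (f : hom C (prod Z X) Y) (h : hom C W Z) :
  comp (curry f) h = curry (comp f (pmap h (cid X))).
Proof.
  rewrite <- (curry_uniq _ _ _ _ (comp (curry f) h)). f_equal.
  rewrite <- (ev_curry _ _ _ _ f) at 2. unfold pmap.
  rewrite !compA, !comp_pairing, !compA, pr1_pairing, pr2_pairing, comp_id_l.
  reflexivity.
Qed.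

Lemma ev_pairing_curry Z X Y (f : hom C (prod Z X) Y) (a : hom C Z X) :
  comp ev (pairing (curry f) a) = comp f (pairing (cid _) a).
Proof.
  rewrite <- (ev_curry _ _ _ _ f) at 2.
  rewrite compA, comp_pairing, compA, pr1_pairing, pr2_pairing, comp_id_r.
  reflexivity.
Qed.

End CartesianClosed.

Ltac cat_norm :=
  repeat (rewrite ?compA, ?comp_id_l, ?comp_id_r, ?pr1_pairing, ?pr2_pairing,
            ?pr1_pairing_comp, ?pr2_pairing_comp, ?comp_pairing).

Section StrongFunctor.
Variables (C : CCC) (M : SModel C).

Definition letmap_hom {G A B} (t : hom C G (Dob M A)) (u : hom C (prod G A) B)
  : hom C G (Dob M B) :=
  comp (Dmap M u) (comp (st M G A) (pairing (cid G) t)).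

Lemma st_pr2 X Y : comp (Dmap M (@pr2 C X Y)) (st M X Y) = pr2.
Proof.
  assert (Epr2 : (@pr2 C X Y) = comp pr2 (pmap (bang X) (cid Y))).
  { unfold pmap. rewrite pr2_pairing, comp_id_l. reflexivity. }
  rewrite Epr2 at 1.
  rewrite Dmap_comp, compA, <- st_nat, Dmap_id, <- compA, st_unit.
  unfold pmap. rewrite pr2_pairing, comp_id_l. reflexivity.
Qed.

Lemma letmap_hom_pr2 G A (t : hom C G (Dob M A)) : letmap_hom t pr2 = t.
Proof. unfold letmap_hom. rewrite <- compA, st_pr2, pr2_pairing. reflexivity. Qed.

Lemma letmap_hom_comp G G' A B (t : hom C G (Dob M A)) (u : hom C (prod G A) B)
  (r : hom C G' G) :
  comp (letmap_hom t u) r = letmap_hom (comp t r) (comp u (pmap r (cid A))).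
Proof.
  unfold letmap_hom. rewrite Dmap_comp. cat_norm. f_equal.
  rewrite <- compA, <- st_nat, Dmap_id. unfold pmap. cat_norm. reflexivity.
Qed.

Lemma letmap_hom_id G A (t : hom C G (Dob M A)) :
  letmap_hom t (cid _) = comp (st M G A) (pairing (cid G) t).
Proof. unfold letmap_hom. rewrite Dmap_id, comp_id_l. reflexivity. Qed.

(* The associativity law of the strength enters here. *)
Lemma letmap_hom_diag G A (t : hom C G (Dob M A)) :
  letmap_hom (letmap_hom t (cid _)) (cid _) = letmap_hom t (pairing pr1 (cid _)).
Proof.
  rewrite !letmap_hom_id.
  transitivity (comp (comp (Dmap M (assoc G G A)) (st M (prod G G) A))
    (comp (pmap (pairing (cid G) (cid G)) (Dmap M (cid A))) (pairing (cid G) t))).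
  { rewrite st_assoc, Dmap_id. unfold pmap, assoc. cat_norm. reflexivity. }
  rewrite compA, <- (compA C _ _ _ _ (pairing (cid G) t)), st_nat.
  rewrite compA, <- (compA C _ _ _ _ (comp (st M G A) _)), <- Dmap_comp.
  unfold letmap_hom. do 2 f_equal.
  unfold pmap, assoc. cat_norm. rewrite pairing_pr1_pr2. reflexivity.
Qed.

Lemma letmap_hom_assoc G A B B' (t : hom C G (Dob M A)) (u : hom C (prod G A) B)
  (u' : hom C (prod G B) B') :
  letmap_hom (letmap_hom t u) u' = letmap_hom t (comp u' (pairing pr1 u)).
Proof.
  assert (Eu : pairing (cid G) (letmap_hom t u)
               = comp (pmap (cid G) (Dmap M u)) (pairing (cid G) (letmap_hom t (cid _)))).
  { unfold pmap, letmap_hom. rewrite Dmap_id. cat_norm. reflexivity. }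
  unfold letmap_hom at 1.
  rewrite Eu, <- (compA C _ _ _ _ (pairing (cid G) _)), st_nat, compA.
  rewrite <- letmap_hom_id, letmap_hom_diag.
  unfold letmap_hom. rewrite <- !compA, <- !Dmap_comp. do 2 f_equal.
  unfold pmap. cat_norm. reflexivity.
Qed.

End StrongFunctor.
Arguments letmap_hom {C} M {G A B} t u.

(** * Soundness *)

Fixpoint sem_sub {C : CCC} (M : SModel C) (b : obj C) {G D : ctx} {struct G}
  : sub G D -> hom C (sem_ctx M b D) (sem_ctx M b G) :=
  match G return sub G D -> hom C (sem_ctx M b D) (sem_ctx M b G) with
  | nil => fun _ => bang _
  | A :: G' => fun s => pairing (sem_sub M b (fun _ v => s _ (Vs v))) (sem M b (s _ Vz))
  end.

Section Soundness.
Variables (C : CCC) (M : SModel C) (b : obj C).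

Lemma sem_letmap G A B (t : tm G (Dia A)) (u : tm (A :: G) B) :
  sem M b (tletmap t u) = letmap_hom M (sem M b t) (sem M b u).
Proof. reflexivity. Qed.

Lemma sem_var_sub G A (v : var G A) : forall D (s : sub G D),
  sem M b (s A v) = comp (sem_var M b v) (sem_sub M b s).
Proof.
  induction v; intros; simpl.
  - rewrite pr2_pairing. reflexivity.
  - rewrite compA, pr1_pairing. apply (IHv _ (fun _ w => s _ (Vs w))).
Qed.

Lemma sem_sub_ren_shift G : forall D B (r : ren G D),
  sem_sub M b (D := B :: D) (fun _ v => tvar (Vs (r _ v)))
  = comp (sem_sub M b (fun _ v => tvar (r _ v))) pr1.
Proof.
  induction G; intros; simpl.
  - apply terminal_eq.
  - rewrite comp_pairing. f_equal. apply (IHG _ _ (fun _ w => r _ (Vs w))).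
Qed.

Lemma sem_sub_ids G : sem_sub M b (@ids G) = cid _.
Proof.
  unfold ids. induction G; simpl.
  - apply terminal_eq.
  - rewrite (sem_sub_ren_shift G G a (fun _ v => v)), IHG, comp_id_l.
    apply pairing_pr1_pr2.
Qed.

Lemma sem_sub_shift G B : sem_sub M b (G := G) (D := B :: G) shift = pr1.
Proof.
  rewrite (sem_sub_ren_shift G G B (fun _ v => v)).
  change (fun A (v : var G A) => tvar v) with (@ids G).
  rewrite sem_sub_ids, comp_id_l. reflexivity.
Qed.

Lemma sem_rename G A (t : tm G A) : forall D (r : ren G D),
  sem M b (rename r t) = comp (sem M b t) (sem_sub M b (fun _ v => tvar (r _ v))).
Proof.
  induction t; intros; cbn [rename]; rewrite ?sem_letmap; simpl.
  - apply (sem_var_sub _ _ v _ (fun _ w => tvar (r _ w))).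
  - apply terminal_eq.
  - rewrite IHt1, IHt2, comp_pairing. reflexivity.
  - rewrite IHt, compA. reflexivity.
  - rewrite IHt, compA. reflexivity.
  - rewrite IHt, curry_comp. simpl. rewrite sem_sub_ren_shift. unfold pmap.
    rewrite comp_id_l. reflexivity.
  - rewrite IHt1, IHt2, compA, comp_pairing. reflexivity.
  - rewrite IHt1, IHt2, letmap_hom_comp. simpl.
    rewrite sem_sub_ren_shift. unfold pmap. rewrite comp_id_l. reflexivity.
Qed.

Lemma sem_wk G A B (t : tm G A) : sem M b (wk (B := B) t) = comp (sem M b t) pr1.
Proof. unfold wk. rewrite sem_rename, sem_sub_shift. reflexivity. Qed.

Lemma sem_sub_wk G : forall D B (s : sub G D),
  sem_sub M b (D := B :: D) (fun _ v => wk (s _ v)) = comp (sem_sub M b s) pr1.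
Proof.
  induction G; intros; simpl.
  - apply terminal_eq.
  - rewrite comp_pairing, sem_wk. f_equal. apply (IHG _ _ (fun _ w => s _ (Vs w))).
Qed.

Lemma sem_lift_sub G D B (s : sub G D) :
  sem_sub M b (lift_sub (B := B) s) = pmap (sem_sub M b s) (cid _).
Proof. simpl. unfold pmap. rewrite comp_id_l, sem_sub_wk. reflexivity. Qed.

Lemma sem_subst G A (t : tm G A) : forall D (s : sub G D),
  sem M b (subst s t) = comp (sem M b t) (sem_sub M b s).
Proof.
  induction t; intros; cbn [subst]; rewrite ?sem_letmap; simpl.
  - apply sem_var_sub.
  - apply terminal_eq.
  - rewrite IHt1, IHt2, comp_pairing. reflexivity.
  - rewrite IHt, compA. reflexivity.
  - rewrite IHt, compA. reflexivity.
  - rewrite IHt, curry_comp, sem_lift_sub. reflexivity.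
  - rewrite IHt1, IHt2, compA, comp_pairing. reflexivity.
  - rewrite IHt1, IHt2, letmap_hom_comp, sem_lift_sub. reflexivity.
Qed.

Theorem soundness G A (t u : tm G A) : eqtm t u -> sem M b t = sem M b u.
Proof.
  induction 1; rewrite ?sem_letmap; simpl; try congruence.
  - apply terminal_eq.
  - symmetry. apply pairing_uniq.
  - apply pr1_pairing.
  - apply pr2_pairing.
  - rewrite sem_wk. symmetry. apply curry_uniq.
  - rewrite ev_pairing_curry. unfold subst1. rewrite sem_subst. simpl.
    rewrite sem_sub_ids. reflexivity.
  - symmetry. apply letmap_hom_pr2.
  - rewrite letmap_hom_assoc, sem_subst. simpl. rewrite sem_sub_shift. reflexivity.
Qed.

End Soundness.

(** * The syntactic model *)

Definition nosub {D} : sub nil D := fun A v =>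
  match v in var L A0 return (match L with nil => tm D A0 | _ => unit end) with
  | Vz => tt | Vs _ => tt end.

(* Composition in the syntactic category: substitution for the only free variable. *)
Notation plug a g := (subst (scons a nosub) g).

Lemma sub1_eta X D (s : sub [X] D) : s = scons (s _ Vz) nosub.
Proof. apply var_cons_ext; [reflexivity|]. intros A v. destruct (var_nil_empty _ v). Qed.

Lemma subst_plug X Y D E (a : tm D X) (g : tm [X] Y) (s : sub D E) :
  subst s (plug a g) = plug (subst s a) g.
Proof. rewrite subst_subst. f_equal. apply sub1_eta. Qed.

Lemma plug_var X Y (g : tm [X] Y) : plug (tvar Vz) g = g.
Proof. rewrite <- (subst_ids _ _ g) at 2. f_equal. symmetry. apply (sub1_eta X [X] ids). Qed.

Lemma wk_as_plug X Y B (g : tm [X] Y) : wk (B := B) g = plug (tvar (Vs Vz)) g.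
Proof.
  unfold wk. rewrite rename_as_subst. f_equal.
  apply (sub1_eta X (B :: [X]) shift).
Qed.

(* Morphisms [X -> Y] of the syntactic category: equivalence classes of terms
   [x : X |- t : Y], represented as predicates so that equality of morphisms is
   Leibniz equality, as the record [CCC] requires. *)
Definition TmHom (X Y : ty) := {P : tm [X] Y -> Prop | exists t, P = eqtm t}.

Definition cls {X Y} (t : tm [X] Y) : TmHom X Y := exist _ (eqtm t) (ex_intro _ t eq_refl).

Definition rep {X Y} (h : TmHom X Y) : tm [X] Y :=
  proj1_sig (constructive_indefinite_description _ (proj2_sig h)).

Lemma cls_eq X Y (t u : tm [X] Y) : eqtm t u -> cls t = cls u.
Proof.
  intro Htu. apply eq_sig_hprop; [intros; apply proof_irrelevance|]. simpl.
  extensionality s. apply propositional_extensionality. rewrite Htu. reflexivity.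
Qed.

Lemma cls_inj X Y (t u : tm [X] Y) : cls t = cls u -> eqtm t u.
Proof.
  intro Htu. apply (f_equal (@proj1_sig _ _)) in Htu. simpl in Htu.
  rewrite Htu. reflexivity.
Qed.

Lemma cls_rep X Y (h : TmHom X Y) : cls (rep h) = h.
Proof.
  unfold rep. destruct (constructive_indefinite_description _ _) as [t Ht]. simpl.
  destruct h as [P HP]. simpl in Ht. subst P. unfold cls. f_equal. apply proof_irrelevance.
Qed.

Lemma cls_surj X Y (h : TmHom X Y) : exists t, h = cls t.
Proof. exists (rep h). symmetry; apply cls_rep. Qed.

Lemma rep_cls X Y (t : tm [X] Y) : eqtm (rep (cls t)) t.
Proof. apply cls_inj. rewrite cls_rep. reflexivity. Qed.

Definition lift1 {X Y X' Y'} (F : tm [X] Y -> tm [X'] Y') (h : TmHom X Y) : TmHom X' Y' :=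
  cls (F (rep h)).
Definition lift2 {X Y X1 Y1 X' Y'} (F : tm [X] Y -> tm [X1] Y1 -> tm [X'] Y')
  (h : TmHom X Y) (k : TmHom X1 Y1) : TmHom X' Y' := cls (F (rep h) (rep k)).

Lemma lift1_cls X Y X' Y' (F : tm [X] Y -> tm [X'] Y') :
  Proper (eqtm ==> eqtm) F -> forall t, lift1 F (cls t) = cls (F t).
Proof. intros HF t. apply cls_eq. rewrite rep_cls. reflexivity. Qed.

Lemma lift2_cls X Y X1 Y1 X' Y' (F : tm [X] Y -> tm [X1] Y1 -> tm [X'] Y') :
  Proper (eqtm ==> eqtm ==> eqtm) F -> forall t u, lift2 F (cls t) (cls u) = cls (F t u).
Proof. intros HF t u. apply cls_eq. rewrite !rep_cls. reflexivity. Qed.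

Definition curry_tm {Z X Y} (f : tm [Prod Z X] Y) : tm [Z] (Arr X Y) :=
  tlam (plug (tpair (tvar (Vs Vz)) (tvar Vz)) f).

Definition hcomp {X Y Z} : TmHom Y Z -> TmHom X Y -> TmHom X Z := lift2 (fun g f => plug f g).
Definition hpairing {Z X Y} : TmHom Z X -> TmHom Z Y -> TmHom Z (Prod X Y) := lift2 tpair.
Definition hcurry {Z X Y} : TmHom (Prod Z X) Y -> TmHom Z (Arr X Y) := lift1 curry_tm.

Lemma hcomp_cls X Y Z (g : tm [Y] Z) (f : tm [X] Y) : hcomp (cls g) (cls f) = cls (plug f g).
Proof. apply lift2_cls. intros g1 g2 Hg f1 f2 Hf. rewrite Hg, Hf. reflexivity. Qed.

Lemma hpairing_cls Z X Y (f : tm [Z] X) (g : tm [Z] Y) :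
  hpairing (cls f) (cls g) = cls (tpair f g).
Proof. apply lift2_cls. typeclasses eauto. Qed.

Lemma hcurry_cls Z X Y (f : tm [Prod Z X] Y) : hcurry (cls f) = cls (curry_tm f).
Proof. apply lift1_cls. intros f1 f2 Hf. unfold curry_tm. rewrite Hf. reflexivity. Qed.

Ltac cls_cases h := let t := fresh "t" in destruct (cls_surj _ _ h) as [t ->].

Ltac tm_simpl :=
  repeat progress (cbn [subst scons lift_sub ids];
    rewrite ?subst_plug, ?wk_as_plug, ?ax_fst_beta, ?ax_snd_beta).

Definition TmCat : CCC.
Proof.
  refine {| obj := ty; hom := TmHom; cid X := cls (tvar Vz); comp := @hcomp;
            one := Unit; bang X := cls tunit; prod := Prod;
            pr1 X Y := cls (tfst (tvar Vz)); pr2 X Y := cls (tsnd (tvar Vz));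
            pairing := @hpairing; exp := Arr;
            ev X Y := cls (tapp (tfst (tvar Vz)) (tsnd (tvar Vz)));
            curry := @hcurry |}.
  - intros. cls_cases f; cls_cases g; cls_cases h. rewrite !hcomp_cls, subst_plug. reflexivity.
  - intros. cls_cases f. rewrite hcomp_cls. reflexivity.
  - intros. cls_cases f. rewrite hcomp_cls, plug_var. reflexivity.
  - intros. cls_cases f. apply cls_eq, ax_unit_eta.
  - intros. cls_cases f; cls_cases g. rewrite hpairing_cls, hcomp_cls. apply cls_eq.
    apply ax_fst_beta.
  - intros. cls_cases f; cls_cases g. rewrite hpairing_cls, hcomp_cls. apply cls_eq.
    apply ax_snd_beta.
  - intros. cls_cases h. rewrite !hcomp_cls, hpairing_cls. apply cls_eq.
    symmetry. apply ax_prod_eta.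
  - intros. cls_cases f. rewrite hcurry_cls, !hcomp_cls, hpairing_cls, hcomp_cls.
    apply cls_eq. unfold curry_tm. tm_simpl. rewrite ax_fun_beta. unfold subst1.
    rewrite subst_plug. tm_simpl. rewrite <- ax_prod_eta, plug_var. reflexivity.
  - intros. cls_cases h. rewrite !hcomp_cls, hpairing_cls, hcomp_cls, hcurry_cls.
    apply cls_eq. unfold curry_tm. tm_simpl. rewrite <- wk_as_plug. symmetry.
    apply ax_fun_eta.
Defined.

Definition dmap_tm {X Y} (f : tm [X] Y) : tm [Dia X] (Dia Y) :=
  tletmap (tvar Vz) (plug (tvar Vz) f).

Definition st_tm X Y : tm [Prod X (Dia Y)] (Dia (Prod X Y)) :=
  tletmap (tsnd (tvar Vz)) (tpair (tfst (tvar (Vs Vz))) (tvar Vz)).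

Definition hdmap X Y : TmHom X Y -> TmHom (Dia X) (Dia Y) := lift1 dmap_tm.

Lemma hdmap_cls X Y (f : tm [X] Y) : hdmap X Y (cls f) = cls (dmap_tm f).
Proof. apply lift1_cls. intros f1 f2 Hf. unfold dmap_tm. rewrite Hf. reflexivity. Qed.

Ltac cls_simpl :=
  repeat (first [ rewrite hcomp_cls | rewrite hpairing_cls | rewrite hdmap_cls
                | rewrite hcurry_cls ]).

Definition TmModel : SModel TmCat.
Proof.
  refine (Build_SModel TmCat Dia hdmap _ _ (fun X Y => cls (st_tm X Y)) _ _ _);
    unfold pmap, assoc; cbn [TmCat cid comp pr1 pr2 pairing bang one prod].
  - intros. rewrite hdmap_cls. apply cls_eq. symmetry. apply ax_letmap_eta.
  - intros. cls_cases f; cls_cases g. cls_simpl. apply cls_eq. unfold dmap_tm. tm_simpl.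
    rewrite ax_letmap_beta. tm_simpl. reflexivity.
  - intros. cls_cases f; cls_cases g. cls_simpl. apply cls_eq. unfold dmap_tm, st_tm.
    tm_simpl. rewrite !ax_letmap_beta. tm_simpl. reflexivity.
  - intros. cls_simpl. apply cls_eq. unfold dmap_tm, st_tm. tm_simpl.
    rewrite ax_letmap_beta. tm_simpl. symmetry. apply ax_letmap_eta.
  - intros. cls_simpl. apply cls_eq. unfold dmap_tm, st_tm. tm_simpl.
    rewrite !ax_letmap_beta. tm_simpl. reflexivity.
Defined.

(** * Completeness *)

Lemma ty_eq_dec (A B : ty) : {A = B} + {A <> B}.
Proof. decide equality. Defined.

Lemma ty_eq_refl (A : ty) (e : A = A) : e = eq_refl.
Proof. apply (UIP_dec ty_eq_dec). Qed.

(* [sem_ty] recurses on the type, so in the syntactic model a type is its own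
   interpretation only up to a propositional equality; terms are moved along it
   with [retype]. *)
Lemma sem_ty_TmModel (A : ty) : A = sem_ty TmModel Base A.
Proof. induction A; simpl; congruence. Qed.

Definition retype {G X Y} (e : X = Y) (t : tm G X) : tm G Y := eq_rect X (tm G) t Y e.


Lemma retype_subst G D X Y (e : X = Y) (s : sub G D) (t : tm G X) :
  subst s (retype e t) = retype e (subst s t).
Proof. destruct e; reflexivity. Qed.

Lemma retype_sym_retype G X Y (e : X = Y) (t : tm G X) :
  retype (Logic.eq_sym e) (retype e t) = t.
Proof. destruct e; reflexivity. Qed.

Lemma retype_retype_sym G X Y (e : X = Y) (t : tm G Y) :
  retype e (retype (Logic.eq_sym e) t) = t.
Proof. destruct e; reflexivity. Qed.

#[export] Instance retype_Proper G X Y (e : X = Y) : Proper (eqtm ==> eqtm) (@retype G X Y e).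
Proof. destruct e; intros t t' Ht; exact Ht. Qed.

Section RetypeConstructors.
Context {G : ctx} {A A' B B' : ty} (e1 : A = A') (e2 : B = B').

Lemma retype_pair (e : Prod A B = Prod A' B') (a : tm G A) (b : tm G B) :
  retype e (tpair a b) = tpair (retype e1 a) (retype e2 b).
Proof. destruct e1, e2. rewrite (ty_eq_refl _ e). reflexivity. Qed.

Lemma retype_fst (e : Prod A B = Prod A' B') (p : tm G (Prod A B)) :
  tfst (retype e p) = retype e1 (tfst p).
Proof. destruct e1, e2. rewrite (ty_eq_refl _ e). reflexivity. Qed.

Lemma retype_snd (e : Prod A B = Prod A' B') (p : tm G (Prod A B)) :
  tsnd (retype e p) = retype e2 (tsnd p).
Proof. destruct e1, e2. rewrite (ty_eq_refl _ e). reflexivity. Qed.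

Lemma retype_app (e : Arr A B = Arr A' B') (f : tm G (Arr A B)) (a : tm G A) :
  tapp (retype e f) (retype e1 a) = retype e2 (tapp f a).
Proof. destruct e1, e2. rewrite (ty_eq_refl _ e). reflexivity. Qed.

Lemma retype_lam (e : Arr A B = Arr A' B') (b : tm (A :: G) B) :
  retype e (tlam b)
  = tlam (retype e2 (subst (scons (retype (Logic.eq_sym e1) (tvar Vz)) shift) b)).
Proof.
  destruct e1, e2. rewrite (ty_eq_refl _ e). simpl. f_equal.
  rewrite <- (subst_ids _ _ b) at 1. f_equal. apply var_cons_ext; reflexivity.
Qed.

Lemma retype_letmap (e0 : Dia A = Dia A') (e : Dia B = Dia B') (t : tm G (Dia A))
  (u : tm (A :: G) B) :
  retype e (tletmap t u)
  = tletmap (retype e0 t)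
      (retype e2 (subst (scons (retype (Logic.eq_sym e1) (tvar Vz)) shift) u)).
Proof.
  destruct e1, e2. rewrite (ty_eq_refl _ e0), (ty_eq_refl _ e). simpl. f_equal.
  rewrite <- (subst_ids _ _ u) at 1. f_equal. apply var_cons_ext; reflexivity.
Qed.

End RetypeConstructors.

(* The interpretation of [G] in the syntactic model is the iterated product of its
   types.  [ctx_proj G] sends each variable of [G] to the corresponding projection
   out of that product, and [ctx_tuple G] packs the variables of [G] into it; the
   two are inverse up to the theory ([plug_ctx_tuple_proj]). *)
Fixpoint ctx_proj (G : ctx) : sub G [sem_ctx TmModel Base G] :=
  match G return sub G [sem_ctx TmModel Base G] with
  | nil => nosub
  | A :: G' => scons (retype (Logic.eq_sym (sem_ty_TmModel A)) (tsnd (tvar Vz)))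
                 (fun _ v => plug (tfst (tvar Vz)) (ctx_proj G' _ v))
  end.

Lemma sem_var_TmModel G A (v : var G A) :
  sem_var TmModel Base v = cls (retype (sem_ty_TmModel A) (ctx_proj G _ v)).
Proof.
  induction v; simpl.
  - rewrite retype_retype_sym. reflexivity.
  - rewrite IHv, hcomp_cls, retype_subst. reflexivity.
Qed.

Lemma ctx_proj_lift G A B (t : tm (A :: G) B) :
  eqtm (plug (tpair (tvar (Vs Vz)) (tvar Vz)) (subst (ctx_proj (A :: G)) t))
       (subst (scons (retype (Logic.eq_sym (sem_ty_TmModel A)) (tvar Vz)) shift)
          (subst (lift_sub (ctx_proj G)) t)).
Proof.
  rewrite !subst_subst. apply subst_sub_eqtm. red. apply var_cons_rect.
  - cbn [ctx_proj scons]. rewrite retype_subst. tm_simpl. reflexivity.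
  - intros A0 v. cbn [ctx_proj scons lift_sub]. tm_simpl. reflexivity.
Qed.

Lemma sem_TmModel G A (t : tm G A) :
  sem TmModel Base t = cls (retype (sem_ty_TmModel A) (subst (ctx_proj G) t)).
Proof.
  induction t; simpl.
  - apply sem_var_TmModel.
  - rewrite (ty_eq_refl _ (sem_ty_TmModel Unit)). reflexivity.
  - rewrite IHt1, IHt2, hpairing_cls, (retype_pair (sem_ty_TmModel A) (sem_ty_TmModel B)).
    reflexivity.
  - rewrite IHt, hcomp_cls. apply cls_eq. tm_simpl.
    rewrite (retype_fst (sem_ty_TmModel A) (sem_ty_TmModel B)). reflexivity.
  - rewrite IHt, hcomp_cls. apply cls_eq. tm_simpl.
    rewrite (retype_snd (sem_ty_TmModel A) (sem_ty_TmModel B)). reflexivity.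
  - rewrite IHt, hcurry_cls. apply cls_eq.
    rewrite (retype_lam (sem_ty_TmModel A) (sem_ty_TmModel B)).
    unfold curry_tm. rewrite retype_subst. apply cg_lam, retype_Proper, ctx_proj_lift.
  - rewrite IHt1, IHt2, hpairing_cls, hcomp_cls. apply cls_eq. tm_simpl.
    rewrite (retype_app (sem_ty_TmModel A) (sem_ty_TmModel B)). reflexivity.
  - rewrite IHt1, IHt2. simpl. cls_simpl. apply cls_eq.
    rewrite (retype_letmap (sem_ty_TmModel A) (sem_ty_TmModel B) (sem_ty_TmModel (Dia A))).
    unfold dmap_tm, st_tm. tm_simpl. rewrite ax_letmap_beta. tm_simpl.
    rewrite retype_subst. apply cg_letmap; [reflexivity|]. apply retype_Proper, ctx_proj_lift.
Qed.

Fixpoint ctx_tuple (G : ctx) : tm G (sem_ctx TmModel Base G) :=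
  match G return tm G (sem_ctx TmModel Base G) with
  | nil => tunit
  | A :: G' => tpair (wk (ctx_tuple G')) (retype (sem_ty_TmModel A) (tvar Vz))
  end.

Lemma plug_wk X Y G B (a : tm G X) (g : tm [X] Y) : wk (B := B) (plug a g) = plug (wk a) g.
Proof. unfold wk. rewrite !rename_as_subst. apply subst_plug. Qed.

Lemma ctx_tuple_proj G A (v : var G A) : eqtm (plug (ctx_tuple G) (ctx_proj G A v)) (tvar v).
Proof.
  induction v; cbn [ctx_proj scons ctx_tuple].
  - rewrite retype_subst. tm_simpl. rewrite retype_sym_retype. reflexivity.
  - rewrite subst_plug. tm_simpl. rewrite <- plug_wk, IHv. reflexivity.
Qed.

Lemma plug_ctx_tuple_proj G A (t : tm G A) :
  eqtm (plug (ctx_tuple G) (subst (ctx_proj G) t)) t.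
Proof.
  rewrite subst_subst. rewrite <- (subst_ids _ _ t) at 2. apply subst_sub_eqtm.
  intros B v. apply ctx_tuple_proj.
Qed.

Lemma completeness G A (t u : tm G A) : sem TmModel Base t = sem TmModel Base u -> eqtm t u.
Proof.
  rewrite !sem_TmModel. intro Hsem. apply cls_inj in Hsem.
  rewrite <- (plug_ctx_tuple_proj _ _ t), <- (plug_ctx_tuple_proj _ _ u).
  rewrite <- (retype_sym_retype _ _ _ (sem_ty_TmModel A) (subst (ctx_proj G) t)),
          <- (retype_sym_retype _ _ _ (sem_ty_TmModel A) (subst (ctx_proj G) u)), Hsem.
  reflexivity.
Qed.

Theorem proposition3p1 :
  forall (G : ctx) (A : ty) (t u : tm G A),
    eqtm t u <->
    (forall (C : CCC) (M : SModel C) (b : obj C), sem M b t = sem M b u).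
Proof.
  intros G A t u. split.
  - intros Htu C M b. apply soundness, Htu.
  - intros Hsem. apply completeness, Hsem.
Qed.
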